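(* In every financial network without default cost (i.e., with $\delta=1$), for any distinct banks $v,w$, there is no positive multi-trade of incoming edges of creditor $v$ to buyer $w$; that is, there is no such multi-trade whose post-trade assets satisfy both $a'_v>a_v$ and $a'_w>a_w$.
   Context: A financial network is $\mathcal{F}=(V,E,\ell,a^x)$: $V$ is a finite set of banks, $E$ a set of directed edges, where $(u,v)\in E$ means debtor $u$ owes creditor $v$ the liability $\ell_{(u,v)}\in\mathbb{N}_{>0}$, and $a^x_b\in\mathbb{N}_{\ge 0}$ are the external assets of bank $b$. $E^+(b)$ and $E^-(b)$ denote the outgoing and incoming edges of $b$, and $L_b=\sum_{e\in E^+(b)}\ell_e$. There is a default-cost parameter $\delta\in[0,1]$. For a payment vector $p=(p_e)_{e\in E}\ge 0$, bank $b$ is solvent if $a^x_b+\sum_{e\in E^-(b)}p_e\ge L_b$, and then its total assets are $a_b=a^x_b+\sum_{e\in E^-(b)}p_e$; otherwise $b$ is in default and $a_b=\delta\,(a^x_b+\sum_{e\in E^-(b)}p_e)$. A fixed point is a vector $p$ with $p_e=\min\{a_b,L_b\}\ell_e/L_b$ for all $b$ and $e\in E^+(b)$. The fixed points form a complete lattice, and the clearing state is its supremum. Assets $a_b$ and recovery rates $r_b=\min\{a_b/L_b,1\}$ always refer to the clearing state. Multi-trade of incoming edges: for distinct banks $v$ (creditor) and $w$ (buyer), let $e_1,\dots,e_k$ be the edges of $E^-(v)\setminus\{(w,v)\}$, with $e_i=(u_i,v)$. Choose fractions $\beta_i\in[0,1]$ and haircut rates $\alpha_i\in[0,1]$, with total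 return $\rho=\sum_i\alpha_i\beta_i\ell_{e_i}\le a^x_w$. In the post-trade network $\mathcal{F}'$, the liability of $e_i$ becomes $(1-\beta_i)\ell_{e_i}$ and $\beta_i\ell_{e_i}$ is added to the liability of edge $(u_i,w)$ (which is created if absent). The external assets of $v$ become $a^x_v+\rho$, those of $w$ become $a^x_w-\rho$, and everything else is unchanged. Post-trade assets $a'_b$ are those in the clearing state of $\mathcal{F}'$, while $a_b$ are those of $\mathcal{F}$. *)

From HB Require Import structures.
From mathcomp Require Import all_boot all_order all_algebra.
From mathcomp Require Import all_classical all_reals.
Set Implicit Arguments. Unset Strict Implicit. Unset Printing Implicit Defensive.
Import Order.TTheory GRing.Theory Num.Theory.
Local Open Scope ring_scope.

Section FinNet.
Variables (R : realType) (V : finType).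

(* A financial network is given by a liability matrix [l : V -> V -> R]
   ([l u x > 0] iff (u,x) is an edge, debtor u, creditor x; [l u x = 0]
   means no edge) and external assets [ax : V -> R]. *)

Definition total_liab (l : V -> V -> R) (b : V) : R := \sum_(c : V) l b c.

Definition inflow (p : V -> V -> R) (b : V) : R := \sum_(u : V) p u b.

Definition solvent (l : V -> V -> R) (ax : V -> R) (p : V -> V -> R) (b : V) : bool :=
  total_liab l b <= ax b + inflow p b.

Definition assets (delta : R) (l : V -> V -> R) (ax : V -> R)
    (p : V -> V -> R) (b : V) : R :=
  if solvent l ax p b then ax b + inflow p b
  else delta * (ax b + inflow p b).

(* fixed point: p >= 0 and p_(u,x) = min{a_u, L_u} * l_(u,x) / L_u on all edges
   (on non-edges l u x = 0 forces p u x = 0; if L_u = 0 there are no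
   outgoing edges and mathcomp's x/0 = 0 gives p u x = 0). *)
Definition fixed_point (delta : R) (l : V -> V -> R) (ax : V -> R)
    (p : V -> V -> R) : Prop :=
  (forall u x, 0 <= p u x) /\
  (forall u x, p u x = Num.min (assets delta l ax p u) (total_liab l u)
                        * l u x / total_liab l u).

Definition clearing_state (delta : R) (l : V -> V -> R) (ax : V -> R)
    (p : V -> V -> R) : Prop :=
  fixed_point delta l ax p /\
  (forall q, fixed_point delta l ax q -> forall u x, q u x <= p u x).

(* Multi-trade of the incoming edges (u,v), u != w, of creditor v to buyer w,
   with fractions beta u and haircut rates alpha u. *)
Definition trade_return (l : V -> V -> R) (v w : V) (alpha beta : V -> R) : R :=
  \sum_(u : V | u != w) alpha u * beta u * l u v.

Definition trade_liab (l : V -> V -> R) (v w : V) (beta : V -> R) : V -> V -> R :=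
  fun u x =>
    if u == w then l u x
    else if x == v then (1 - beta u) * l u v
    else if x == w then l u w + beta u * l u v
    else l u x.

Definition trade_ext (ax : V -> R) (v w : V) (rho : R) : V -> R :=
  fun b => if b == v then ax b + rho
           else if b == w then ax b - rho
           else ax b.

End FinNet.

Definition liabR (R : realType) (V : finType) (l : V -> V -> nat) : V -> V -> R :=
  fun u x => (l u x)%:R.
Definition extR (R : realType) (V : finType) (ax : V -> nat) : V -> R :=
  fun b => (ax b)%:R.

(* Without default costs the clearing payouts m_u = min(a_u, L_u) form the
   greatest fixed point of the monotone map f |-> min(a^x + f C, L), where C is
   the matrix of relative liabilities.  Suppose both v and w gain.  The trade
   changes C and a^x only in the columns of v and w, so max(m, m') is a
   post-fixed point of the new map: every payout, hence every asset, weakly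
   increases.  No money is lost, so the total asset gain equals the total
   payout gain, and as min(., L_u) is 1-Lipschitz the two gains agree bank by
   bank.  The strict gainers S therefore all default, and none of them owes
   anything outside S.  A nonnegative subinvariant vector of C on S (from a
   stationary vector of a stochastic matrix) then raises the payouts of S,
   contradicting the maximality of the clearing state. *)

From HB Require Import structures.
From mathcomp Require Import all_boot all_order all_algebra.
From mathcomp Require Import all_classical all_reals.
From mathcomp Require Import lra.
Import Order.TTheory GRing.Theory Num.Theory.
Local Open Scope ring_scope.

Section FinVectors.
Context {R : realType} {V : finType}.

Lemma sum_enum_val (F : V -> R) : \sum_u F u = \sum_(i < #|V|) F (enum_val i).
Proof. by rewrite -big_enum_val; apply: eq_bigl. Qed.

Lemma stochastic_left_fixed_vector (M : V -> V -> R) (v0 : V) :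
  (forall y, \sum_u M y u = 1) ->
  exists2 z : V -> R, (exists u, z u != 0) & forall u, z u = \sum_y z y * M y u.
Proof.
(* [I - M] kills the all-ones vector, so it is singular. *)
move=> M_row; pose n := #|V|.
pose K : 'M[R]_n := \matrix_(i, j) ((i == j)%:R - M (enum_val i) (enum_val j)).
have K1 : const_mx 1 *m K^T = 0 :> 'rV_n.
  apply/matrixP => i j; rewrite !mxE.
  under eq_bigr => k _ do rewrite !mxE mul1r.
  rewrite sumrB -sum_enum_val M_row (bigD1 j) //= eqxx big1 ?addr0 ?subrr //.
  by move=> k /negPf kj; rewrite eq_sym kj.
have /det0P [z z_neq0 zK] : \det K == 0.
  rewrite -det_tr; apply/det0P; exists (const_mx 1) => //.
  by apply/eqP => /matrixP /(_ 0 (enum_rank v0)); rewrite !mxE; apply/eqP/oner_neq0.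
exists (fun u => z 0 (enum_rank u)).
  have [i zi | z0] := pickP (fun i => z 0 i != 0).
    by exists (enum_val i); rewrite enum_valK.
  by case/eqP: z_neq0; apply/matrixP => i j; rewrite mxE ord1; apply/eqP/negbFE/z0.
move=> u; move/matrixP/(_ 0 (enum_rank u)): zK; rewrite !mxE.
under eq_bigr => k _ do rewrite !mxE mulrBr.
rewrite sumrB (bigD1 (enum_rank u)) //= eqxx mulr1 big1 ?addr0; last first.
  by move=> k /negPf ku; rewrite ku mulr0.
move/eqP; rewrite subr_eq0 => /eqP ->; rewrite sum_enum_val.
by apply: eq_bigr => i _; rewrite enum_valK !enum_rankK.
Qed.

(* Send every row outside [S] to [v0]: a stationary vector of the resulting
   stochastic matrix vanishes off [S], and its modulus is subinvariant. *)
Lemma closed_class_subinvariant (c : V -> V -> R) (S : pred V) (v0 : V) :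
  S v0 -> (forall y u, 0 <= c y u) ->
  (forall y, S y -> \sum_u c y u = 1) ->
  (forall y u, S y -> ~~ S u -> c y u = 0) ->
  exists x : V -> R, [/\ forall u, 0 <= x u, exists u, x u != 0,
    forall u, ~~ S u -> x u = 0 & forall u, x u <= \sum_y x y * c y u].
Proof.
move=> Sv0 c_ge0 c_row c_closed.
pose M y u := if S y then c y u else (u == v0)%:R.
have M_row y : \sum_u M y u = 1.
  rewrite /M; case Sy: (S y); first exact: c_row.
  by rewrite (bigD1 v0) //= eqxx big1 ?addr0 // => u /negPf ->.
have [z [u1 zu1] zM] := stochastic_left_fixed_vector _ v0 M_row.
have z_off u : ~~ S u -> z u = 0.
  move=> Su; rewrite zM big1 // => y _; rewrite /M; case: ifP => Sy.
    by rewrite c_closed ?Sy ?mulr0.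
  by rewrite (_ : (u == v0) = false) ?mulr0 //; apply: contraNF Su => /eqP ->.
exists (fun u => `|z u|); split.
- by move=> u; apply: normr_ge0.
- by exists u1; rewrite normr_eq0.
- by move=> u /z_off ->; apply: normr0.
move=> u; rewrite {1}zM; apply: le_trans (ler_norm_sum _ _ _) _.
apply: ler_sum => y _; rewrite normrM /M; case: ifP => Sy.
  by rewrite (ger0_norm (c_ge0 y u)).
by rewrite z_off ?Sy // normr0 !mul0r.
Qed.

Lemma exists_pos_scale_le (S : pred V) (d x : V -> R) :
  (forall u, S u -> 0 < d u) -> (forall u, 0 <= x u) ->
  exists2 eps : R, 0 < eps & forall u, S u -> eps * x u <= d u.
Proof.
move=> d_gt0 x_ge0; pose t := \sum_(u | S u) x u / d u.
have ratio_ge0 u : S u -> 0 <= x u / d u.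
  by move=> Su; apply: divr_ge0 => //; apply/ltW/d_gt0.
have t_ge0 : 0 <= t by apply: sumr_ge0.
exists (1 + t)^-1; first by rewrite invr_gt0; lra.
move=> u Su; rewrite mulrC ler_pdivrMr; last by lra.
rewrite mulrC -ler_pdivrMr ?d_gt0 //.
suff : x u / d u <= t by lra.
by rewrite /t (bigD1 u) //= lerDl sumr_ge0 // => i /andP [] /ratio_ge0.
Qed.

(* Knaster--Tarski: the pointwise supremum of the post-fixed points is fixed. *)
Lemma monotone_fixed_above (F : (V -> R) -> V -> R) (b f : V -> R) :
  (forall g h, (forall u, g u <= h u) -> forall u, F g u <= F h u) ->
  (forall g u, F g u <= b u) ->
  (forall u, f u <= F f u) ->
  exists2 g, (forall u, f u <= g u) & forall u, F g u = g u.
Proof.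
move=> F_mono F_le_b f_post.
pose post : set (V -> R) := fun h => forall u, h u <= F h u.
pose E u := [set h u | h in post]%classic.
have E_sup u : has_sup (E u).
  split; first by exists (f u), f.
  by exists (b u) => _ [h h_post <-]; apply: le_trans (h_post u) (F_le_b h u).
pose g u := sup (E u).
have g_ub h : post h -> forall u, h u <= g u.
  by move=> h_post u; apply: sup_upper_bound (E_sup u) _ _; exists h.
have g_post : post g.
  move=> u; apply: ge_sup; first by exists (f u), f.
  by move=> _ [h h_post <-]; apply: le_trans (h_post u) (F_mono _ _ (g_ub h h_post) u).
exists g; first exact: g_ub.
move=> u; apply/eqP; rewrite eq_le g_post andbT; apply: g_ub.
exact: F_mono g_post.
Qed.

End FinVectors.

Section Clearing.
Context {R : realType} {V : finType}.
Implicit Types (l p : V -> V -> R) (ax f : V -> R).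

Definition rel_liab l y u := l y u / total_liab l y.

Definition payout l ax p y := Num.min (assets 1 l ax p y) (total_liab l y).

Definition pay_map l ax f u :=
  Num.min (ax u + \sum_y f y * rel_liab l y u) (total_liab l u).

Definition payments_of l f y u := f y * rel_liab l y u.

Lemma assets_nocost l ax p u : assets 1 l ax p u = ax u + inflow p u.
Proof. by rewrite /assets; case: ifP; rewrite ?mul1r. Qed.

Variables (l : V -> V -> R) (ax : V -> R).
Hypotheses (l_ge0 : forall y u, 0 <= l y u) (ax_ge0 : forall u, 0 <= ax u).

Lemma total_liab_ge0 y : 0 <= total_liab l y.
Proof. exact: sumr_ge0. Qed.

Lemma rel_liab_ge0 y u : 0 <= rel_liab l y u.
Proof. by rewrite divr_ge0 ?total_liab_ge0. Qed.

Lemma pay_map_mono f g : (forall u, f u <= g u) ->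
  forall u, pay_map l ax f u <= pay_map l ax g u.
Proof.
move=> fg u; rewrite le_min !ge_min lexx !orbT andbT lerD2l.
by apply/orP; left; apply: ler_sum => y _; rewrite ler_wpM2r ?rel_liab_ge0.
Qed.

Lemma pay_map_le_total f u : pay_map l ax f u <= total_liab l u.
Proof. by rewrite ge_min lexx orbT. Qed.

Lemma assets_ge0 p : (forall y u, 0 <= p y u) -> forall u, 0 <= assets 1 l ax p u.
Proof. by move=> p_ge0 u; rewrite assets_nocost addr_ge0 ?sumr_ge0. Qed.

Lemma inflow_fixed p : fixed_point 1 l ax p ->
  forall u, inflow p u = \sum_y payout l ax p y * rel_liab l y u.
Proof. by move=> [_ p_eq] u; apply: eq_bigr => y _; rewrite p_eq mulrA. Qed.

Lemma pay_map_payout p : fixed_point 1 l ax p ->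
  forall u, pay_map l ax (payout l ax p) u = payout l ax p u.
Proof. by move=> fp u; rewrite /payout assets_nocost inflow_fixed. Qed.

Lemma payout_ge0 p : fixed_point 1 l ax p -> forall u, 0 <= payout l ax p u.
Proof. by move=> [p_ge0 _] u; rewrite le_min assets_ge0 ?total_liab_ge0. Qed.

Lemma row_sum_payout p : fixed_point 1 l ax p ->
  forall y, \sum_u p y u = payout l ax p y.
Proof.
move=> fp y; rewrite (eq_bigr _ (fun u _ => fp.2 y u)) -mulr_suml -mulr_sumr.
have [L0 | L_neq0] := eqVneq (total_liab l y) 0; last by rewrite mulfK.
rewrite /payout L0 invr0 !mulr0; apply/esym/min_idPr.
by rewrite assets_ge0 //; case: fp.
Qed.

Lemma sum_assets_nocost p : fixed_point 1 l ax p ->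
  \sum_u assets 1 l ax p u = \sum_u ax u + \sum_y payout l ax p y.
Proof.
move=> fp; under eq_bigr do rewrite assets_nocost.
rewrite big_split /= exchange_big; congr (_ + _).
by apply: eq_bigr => y _; rewrite row_sum_payout.
Qed.

Lemma payout_payments_of f u : payout l ax (payments_of l f) u = pay_map l ax f u.
Proof. by rewrite /payout assets_nocost. Qed.

Lemma fixed_point_payments_of f : (forall u, 0 <= f u) ->
  (forall u, pay_map l ax f u = f u) -> fixed_point 1 l ax (payments_of l f).
Proof.
move=> f_ge0 f_fix; split=> y u; first by rewrite mulr_ge0 ?rel_liab_ge0.
by rewrite -/(payout _ _ _ y) payout_payments_of f_fix /payments_of /rel_liab mulrA.
Qed.

Lemma payout_ge_post_fixed p f : clearing_state 1 l ax p ->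
  (forall u, 0 <= f u) -> (forall u, f u <= pay_map l ax f u) ->
  forall u, f u <= payout l ax p u.
Proof.
move=> [fp p_max] f_ge0 f_post u.
have [g fg g_fix] := monotone_fixed_above _ _ _ pay_map_mono pay_map_le_total f_post.
have fpg := fixed_point_payments_of g (fun u => le_trans (f_ge0 u) (fg u)) g_fix.
apply: le_trans (fg u) _.
rewrite -g_fix -payout_payments_of -(row_sum_payout _ fpg) -(row_sum_payout _ fp).
by apply: ler_sum => x _; apply: p_max.
Qed.

(* Along a subinvariant vector [x] on [S], [payout + eps * x] is still a
   post-fixed point of [pay_map] for small [eps > 0]. *)
Lemma clearing_no_closed_default p (S : pred V) (u0 : V) :
  clearing_state 1 l ax p -> S u0 ->
  (forall y u, S y -> ~~ S u -> l y u = 0) ->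
  (forall u, S u -> assets 1 l ax p u < total_liab l u) -> False.
Proof.
move=> cs Su0 S_closed S_default; have fp := cs.1.
set a := assets 1 l ax p in S_default.
have a_ge0 : forall u, 0 <= a u := assets_ge0 _ fp.1.
have L_gt0 y : S y -> 0 < total_liab l y.
  by move=> Sy; apply: le_lt_trans (a_ge0 y) (S_default y Sy).
have S_rows y : S y -> \sum_u rel_liab l y u = 1.
  by move=> Sy; rewrite -mulr_suml divff // lt0r_neq0 ?L_gt0.
have S_closed_rel y u : S y -> ~~ S u -> rel_liab l y u = 0.
  by move=> Sy Su; rewrite /rel_liab S_closed ?mul0r.
have [x [x_ge0 [u1 xu1] x_off x_sub]] :=
  closed_class_subinvariant _ _ _ Su0 rel_liab_ge0 S_rows S_closed_rel.
have slack_gt0 u : S u -> 0 < total_liab l u - a u.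
  by move=> Su; rewrite subr_gt0 S_default.
have [eps eps_gt0 eps_x_le] := exists_pos_scale_le _ _ _ slack_gt0 x_ge0.
pose q u := payout l ax p u + eps * x u.
have m_le_q u : payout l ax p u <= q u by rewrite lerDl mulr_ge0 // ltW.
have q_post u : q u <= pay_map l ax q u.
  have [Su | Su] := boolP (S u); last first.
    rewrite /q x_off // mulr0 addr0 -pay_map_payout //.
    exact: pay_map_mono m_le_q u.
  have m_a : payout l ax p u = a u by apply/min_idPl/ltW/S_default.
  rewrite le_min; apply/andP; split; last by rewrite /q m_a -lerBrDl eps_x_le.
  rewrite /q m_a {1}/a assets_nocost inflow_fixed // -addrA lerD2l.
  under [X in _ <= X]eq_bigr do rewrite mulrDl -mulrA.
  by rewrite big_split /= lerD2l -mulr_sumr ler_pM2l.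
have q_ge0 u : 0 <= q u := le_trans (payout_ge0 _ fp u) (m_le_q u).
have := payout_ge_post_fixed _ _ cs q_ge0 q_post u1.
by rewrite /q gerDl pmulr_rle0 // leNgt lt_def xu1 x_ge0.
Qed.

End Clearing.

Arguments rel_liab_ge0 {R V l}.
Arguments pay_map_mono {R V l ax} _ {f g}.
Arguments assets_ge0 {R V l ax} _ {p}.
Arguments inflow_fixed {R V l ax p}.
Arguments pay_map_payout {R V l ax p}.
Arguments payout_ge0 {R V l ax} _ _ {p}.
Arguments sum_assets_nocost {R V l ax} _ {p}.
Arguments payout_ge_post_fixed {R V l ax} _ _ {p f}.
Arguments clearing_no_closed_default {R V l ax} _ _ {p S u0}.

Lemma ler_min_sub (R : realDomainType) (x y z : R) : x <= y ->
  Num.min y z - Num.min x z <= y - x.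
Proof. by move=> xy; rewrite !minEle; case: (leP y z); case: (leP x z) => //; lra. Qed.

Section Comparison.
Context {R : realType} {V : finType}.
Variables (l l' : V -> V -> R) (ax ax' : V -> R) (T : pred V) (p p' : V -> V -> R).
Hypotheses (l_ge0 : forall y u, 0 <= l y u) (l'_ge0 : forall y u, 0 <= l' y u).
Hypotheses (ax_ge0 : forall u, 0 <= ax u) (ax'_ge0 : forall u, 0 <= ax' u).
Hypothesis total_liab_eq : forall y, total_liab l' y = total_liab l y.
Hypothesis liab_off : forall y u, ~~ T u -> l' y u = l y u.
Hypothesis ext_off : forall u, ~~ T u -> ax' u = ax u.
Hypothesis sum_ext : \sum_u ax' u = \sum_u ax u.
Hypothesis cs : clearing_state 1 l ax p.
Hypothesis cs' : clearing_state 1 l' ax' p'.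
Hypothesis gain_T : forall t, T t -> assets 1 l ax p t < assets 1 l' ax' p' t.

Local Notation a := (assets 1 l ax p).
Local Notation a' := (assets 1 l' ax' p').
Local Notation m := (payout l ax p).
Local Notation m' := (payout l' ax' p').

Lemma payout'E u : m' u = Num.min (a' u) (total_liab l u).
Proof. by rewrite /payout total_liab_eq. Qed.

Lemma rel_liab_off y u : ~~ T u -> rel_liab l' y u = rel_liab l y u.
Proof. by move=> Tu; rewrite /rel_liab liab_off // total_liab_eq. Qed.

Lemma pay_map_off f u : ~~ T u -> pay_map l' ax' f u = pay_map l ax f u.
Proof.
move=> Tu; rewrite /pay_map ext_off // total_liab_eq.
by congr (Num.min (_ + _) _); apply: eq_bigr => y _; rewrite rel_liab_off.
Qed.

Lemma assets_gain_off u : ~~ T u ->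
  a' u - a u = \sum_y (m' y - m y) * rel_liab l y u.
Proof.
move=> Tu; rewrite !assets_nocost (inflow_fixed cs.1) (inflow_fixed cs'.1) ext_off //.
rewrite opprD addrACA subrr add0r -sumrB.
by apply: eq_bigr => y _; rewrite rel_liab_off // mulrBl.
Qed.

Lemma payout_le u : m u <= m' u.
Proof.
pose s u := Num.max (m u) (m' u).
have s_post v : s v <= pay_map l' ax' s v.
  have m'_le : m' v <= pay_map l' ax' s v.
    rewrite -(pay_map_payout cs'.1).
    by apply: pay_map_mono => // y; rewrite le_max lexx orbT.
  rewrite ge_max m'_le andbT; have [Tv | Tv] := boolP (T v).
    by apply: le_trans m'_le; rewrite payout'E le_min2 // ltW ?gain_T.
  rewrite pay_map_off // -(pay_map_payout cs.1).
  by apply: pay_map_mono => // y; rewrite le_max lexx.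
have s_ge0 v : 0 <= s v by rewrite le_max (payout_ge0 l_ge0 ax_ge0 cs.1).
apply: le_trans (payout_ge_post_fixed l'_ge0 ax'_ge0 cs' s_ge0 s_post u).
by rewrite le_max lexx.
Qed.

Lemma assets_le u : a u <= a' u.
Proof.
have [Tu | Tu] := boolP (T u); first exact/ltW/gain_T.
rewrite -subr_ge0 assets_gain_off // sumr_ge0 // => y _.
by rewrite mulr_ge0 ?subr_ge0 ?payout_le ?rel_liab_ge0.
Qed.

(* Each bank's gain in assets is at least its gain in payout, and both gains
   have the same total. *)
Lemma assets_gain_eq u : a' u - a u = m' u - m u.
Proof.
have gap_ge0 v : 0 <= (a' v - a v) - (m' v - m v).
  by rewrite subr_ge0 payout'E ler_min_sub ?assets_le.
have gap_sum : \sum_v ((a' v - a v) - (m' v - m v)) = 0.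
  rewrite !sumrB (sum_assets_nocost ax_ge0 cs.1) (sum_assets_nocost ax'_ge0 cs'.1) sum_ext.
  lra.
apply/eqP; rewrite -subr_eq0; apply/eqP.
exact: (psumr_eq0P (fun v _ => gap_ge0 v) gap_sum).
Qed.

Lemma gainer_default u : a u < a' u -> a u < total_liab l u.
Proof.
move=> gain; rewrite ltNge; apply/negP => L_le_a.
have := assets_gain_eq u; rewrite payout'E /payout !min_r //; first lra.
exact: le_trans L_le_a (assets_le u).
Qed.

Lemma gainers_closed y u : a y < a' y -> ~~ (a u < a' u) -> l y u = 0.
Proof.
move=> gain_y no_gain_u.
have Tu : ~~ T u by apply: contra no_gain_u; apply: gain_T.
have gap_ge0 v : 0 <= (m' v - m v) * rel_liab l v u.
  by rewrite mulr_ge0 ?subr_ge0 ?payout_le ?rel_liab_ge0.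
have := assets_gain_off u Tu; rewrite (_ : a' u - a u = 0); last first.
  by move: no_gain_u (assets_le u); rewrite -leNgt; lra.
move=> /esym/(psumr_eq0P (fun v _ => gap_ge0 v))/(_ y isT)/eqP.
rewrite mulf_eq0 -assets_gain_eq subr_eq0 gt_eqF //= mulf_eq0 invr_eq0.
rewrite (gt_eqF (le_lt_trans (assets_ge0 ax_ge0 cs.1.1 y) (gainer_default y gain_y))).
by rewrite orbF => /eqP.
Qed.

Lemma no_strict_gain_on_support t0 : T t0 -> False.
Proof.
move=> Tt0; apply: (clearing_no_closed_default l_ge0 ax_ge0
  (S := fun u => a u < a' u) cs (gain_T t0 Tt0)).
- exact: gainers_closed.
- exact: gainer_default.
Qed.

End Comparison.

Arguments no_strict_gain_on_support {R V l l' ax ax' T p p'}.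

Section Trade.
Context {R : realType} {V : finType}.
Variables (v w : V) (beta : V -> R).
Hypothesis vw : v != w.

Lemma sum_split_pair (F : V -> R) :
  \sum_u F u = F v + F w + \sum_(u | ~~ pred2 v w u) F u.
Proof.
rewrite (bigD1 v) //= (bigD1 w) 1?eq_sym //= addrA; congr (_ + _).
by apply: eq_bigl => u; rewrite negb_or.
Qed.

Lemma trade_liab_off (l : V -> V -> R) y u :
  ~~ pred2 v w u -> trade_liab l v w beta y u = l y u.
Proof.
by rewrite negb_or => /andP [/negPf uv /negPf uw]; rewrite /trade_liab uv uw; case: ifP.
Qed.

Lemma total_liab_trade (l : V -> V -> R) y :
  total_liab (trade_liab l v w beta) y = total_liab l y.
Proof.
rewrite /total_liab; have [-> | yw] := eqVneq y w.
  by apply: eq_bigr => u _; rewrite /trade_liab eqxx.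
rewrite !sum_split_pair (eq_bigr _ (trade_liab_off l y)) /trade_liab (negPf yw).
by rewrite eqxx eq_sym (negPf vw) eqxx; lra.
Qed.

Lemma trade_ext_off (ax : V -> R) rho u :
  ~~ pred2 v w u -> trade_ext ax v w rho u = ax u.
Proof. by rewrite negb_or => /andP [/negPf uv /negPf uw]; rewrite /trade_ext uv uw. Qed.

Lemma sum_trade_ext (ax : V -> R) rho :
  \sum_u trade_ext ax v w rho u = \sum_u ax u.
Proof.
rewrite !sum_split_pair (eq_bigr _ (trade_ext_off ax rho)) /trade_ext.
by rewrite eqxx eq_sym (negPf vw) eqxx; lra.
Qed.

Lemma trade_liab_ge0 (l : V -> V -> R) :
  (forall y u, 0 <= l y u) -> (forall u, 0 <= beta u <= 1) ->
  forall y u, 0 <= trade_liab l v w beta y u.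
Proof.
move=> l_ge0 beta01 y u; have /andP [b_ge0 b_le1] := beta01 y.
rewrite /trade_liab; case: ifP => // _; case: ifP => _.
  by rewrite mulr_ge0 ?subr_ge0.
by case: ifP => // _; rewrite addr_ge0 ?mulr_ge0.
Qed.

Lemma trade_ext_ge0 (ax : V -> R) rho :
  (forall u, 0 <= ax u) -> 0 <= rho -> rho <= ax w ->
  forall u, 0 <= trade_ext ax v w rho u.
Proof.
move=> ax_ge0 rho_ge0 rho_le u; rewrite /trade_ext.
case: ifP => _; first by rewrite addr_ge0.
by case: ifP => // /eqP ->; rewrite subr_ge0.
Qed.

End Trade.

Arguments trade_liab_ge0 {R V v w beta l}.
Arguments trade_liab_off {R V v w beta l}.
Arguments total_liab_trade {R V v w beta} _ {l}.
Arguments trade_ext_off {R V v w ax rho}.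
Arguments sum_trade_ext {R V v w} _ {ax rho}.
Arguments trade_ext_ge0 {R V v w ax rho}.

Lemma trade_return_ge0 (R : realType) (V : finType) (l : V -> V -> R) v w alpha beta :
  (forall y u, 0 <= l y u) -> (forall u, 0 <= alpha u) -> (forall u, 0 <= beta u) ->
  0 <= trade_return l v w alpha beta.
Proof. by move=> *; apply: sumr_ge0 => u _; rewrite !mulr_ge0. Qed.

Theorem proposition1 (R : realType) (V : finType)
    (l : V -> V -> nat) (ax : V -> nat) (v w : V) (alpha beta : V -> R)
    (p p' : V -> V -> R) :
  v != w ->
  (forall u, 0 <= alpha u <= 1) ->
  (forall u, 0 <= beta u <= 1) ->
  trade_return (liabR R l) v w alpha beta <= extR R ax w ->
  clearing_state 1 (liabR R l) (extR R ax) p ->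
  clearing_state 1 (trade_liab (liabR R l) v w beta)
    (trade_ext (extR R ax) v w (trade_return (liabR R l) v w alpha beta)) p' ->
  ~ (assets 1 (liabR R l) (extR R ax) p v <
       assets 1 (trade_liab (liabR R l) v w beta)
         (trade_ext (extR R ax) v w (trade_return (liabR R l) v w alpha beta)) p' v
     /\
     assets 1 (liabR R l) (extR R ax) p w <
       assets 1 (trade_liab (liabR R l) v w beta)
         (trade_ext (extR R ax) v w (trade_return (liabR R l) v w alpha beta)) p' w).
Proof.
move=> vw alpha01 beta01 rho_le cs cs' [gain_v gain_w].
have l_ge0 : forall y u, 0 <= liabR R l y u by move=> y u; apply: ler0n.
have ax_ge0 : forall u, 0 <= extR R ax u by move=> u; apply: ler0n.
have rho_ge0 : 0 <= trade_return (liabR R l) v w alpha beta.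
  by apply: trade_return_ge0 => // u; [case/andP: (alpha01 u) | case/andP: (beta01 u)].
apply: (no_strict_gain_on_support l_ge0 (trade_liab_ge0 l_ge0 beta01) ax_ge0
  (trade_ext_ge0 ax_ge0 rho_ge0 rho_le) (total_liab_trade vw) trade_liab_off
  trade_ext_off (sum_trade_ext vw) cs cs' _ v).
- by move=> t /orP [] /eqP ->.
- by rewrite /= eqxx.
Qed.
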